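(* Let $G$ be a path-pairable graph on $n$ vertices with diameter $d \geq 20$, and let $x,y$ be vertices with $d(x,y)=d$. For $0\le i\le d$ let $S_i=\{z\in V(G): d(x,z)=i\}$, and define $A=\bigcup_{i=0}^{\lceil d/3\rceil}S_i$ and $C=\bigcup_{i=\lfloor 2d/3\rfloor}^{d}S_i$. Then $|A|\geq \min\left(\frac{n}{2},\frac{d^2}{100}\right)$ and $|C|\geq \min\left(\frac{n}{2},\frac{d^2}{100}\right)$.
   Context: A graph $G$ on $n=2m$ vertices is path-pairable if for every partition of its vertex set into $m$ pairs $\{x_1,y_1\},\dots,\{x_m,y_m\}$ there exist pairwise edge-disjoint paths $P_1,\dots,P_m$ such that $P_i$ joins $x_i$ to $y_i$ for each $i$. $d(u,v)$ denotes the graph distance between vertices $u$ and $v$; the diameter is the maximum distance between two vertices. *)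

(* Simple graph: symmetric irreflexive relation e on a finType. *)
From mathcomp Require Import all_boot all_order all_algebra.
Set Implicit Arguments. Unset Strict Implicit. Unset Printing Implicit Defensive.
Import Order.TTheory GRing.Theory Num.Theory.

Section Graph.
Variable T : finType.
Variable e : rel T.

Definition ball (u : T) (k : nat) : {set T} :=
  iter k (fun B => B :|: [set z | [exists w in B, e w z]]) [set u].

(* graph distance: least k with v in ball u k (junk value #|T| if unreachable) *)
Definition dist (u v : T) : nat := find (fun k => v \in ball u k) (iota 0 #|T|).

Definition gconnected : Prop := forall u v : T, connect e u v.

Definition diameter : nat := \max_(uv : T * T) dist uv.1 uv.2.

Definition sphere (x : T) (i : nat) : {set T} := [set z | dist x z == i].

Definition is_gpath (u v : T) (p : seq T) : bool :=
  [&& path e u p, uniq (u :: p) & last u p == v].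

Definition pedges (u : T) (p : seq T) : seq {set T} :=
  [seq [set a.1; a.2] | a <- zip (u :: p) p].

(* a partition of the vertex set into pairs {v, f v} *)
Definition pairing (f : T -> T) : Prop := forall v, f v != v /\ f (f v) = v.

(* path-pairable: n is even and for every partition into pairs there are
   pairwise edge-disjoint paths joining each pair (P v is a path for the
   pair {v, f v}; paths of distinct pairs share no edge). *)
Definition path_pairable : Prop :=
  ~~ odd #|T| /\
  forall f : T -> T, pairing f ->
    exists P : T -> seq T,
      (forall v, is_gpath v (f v) (P v)) /\
      (forall v w, [set v; f v] != [set w; f w] ->
         forall E, E \in pedges v (P v) -> E \notin pedges w (P w)).
End Graph.

From mathcomp Require Import all_boot all_order all_algebra zify lra.
Import Order.TTheory GRing.Theory Num.Theory.
Set Implicit Arguments. Unset Strict Implicit. Unset Printing Implicit Defensive.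

(* Let B_i be the set of vertices at distance at most i from x and S_i the
   i-th sphere. If |B_k| < n/2, pair every vertex of B_k with a vertex outside
   B_k; the edge-disjoint paths of such a pairing starting in B_i must all use
   distinct edges between S_i and S_(i+1), so |B_i| <= |S_i| |S_(i+1)| for
   i < k. Together with |B_(i+1)| = |B_i| + |S_(i+1)| this forces
   |S_(i+1)| + |S_(i+2)| > 2 sqrt |B_i|, hence |B_k| >= (k/2 + 1)^2. The set C
   is the same argument with distances counted down from d. *)

Definition partner (j : nat) : nat := if odd j then j.-1 else j.+1.

Lemma partnerK : involutive partner.
Proof. by case=> [|j] //; rewrite /partner /=; case oj: (odd j) => /=; rewrite ?oj. Qed.

Lemma partner_neq j : partner j != j.
Proof. by case: j => [|j] //; rewrite /partner; case: ifP => _; lia. Qed.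

Lemma partner_lt m j : ~~ odd m -> j < m -> partner j < m.
Proof.
rewrite /partner; case: ifP => [_ _|oj em]; first by lia.
by rewrite leq_eqVlt => /orP [/eqP ej|//]; rewrite -ej /= oj in em.
Qed.

Section Pairing.
Variable T : finType.

Lemma pairing_of_index_involution (s : seq T) (pi : nat -> nat) :
  uniq s -> (forall v, v \in s) ->
  (forall i, i < size s -> [/\ pi i < size s, pi (pi i) = i & pi i != i]) ->
  pairing (fun v => nth v s (pi (index v s))).
Proof.
move=> us s_full pi_inv v.
have iv : index v s < size s by rewrite index_mem.
have [lt_pi pi_invol pi_neq] := pi_inv _ iv.
have index_fv : index (nth v s (pi (index v s))) s = pi (index v s).
  exact: index_uniq.
split; last by rewrite index_fv pi_invol (set_nth_default v) // nth_index.
by apply: contra pi_neq => /eqP {2}<-; rewrite index_fv.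
Qed.

(* Positions below k are matched with the next k positions, and the remaining
   positions with their neighbours: in the enumeration of A followed by its
   complement, this matches every vertex of A with a vertex outside A. *)
Definition cross_index (k i : nat) : nat :=
  if i < k then i + k else if i < k.*2 then i - k else k.*2 + partner (i - k.*2).

Lemma cross_indexP k m i : ~~ odd m -> i < k.*2 + m ->
  [/\ cross_index k (cross_index k i) = i, cross_index k i != i
    & cross_index k i < k.*2 + m].
Proof.
move=> em lt_i; rewrite /cross_index.
have [lt_ik|le_ki] := ltnP i k.
  have -> : (i + k < k) = false by lia.
  have -> : i + k < k.*2 by lia.
  by rewrite addnK; split; lia.
have [lt_ik2|le_ik2] := ltnP i k.*2.
  have -> : i - k < k by lia.
  by rewrite subnK //; split; lia.
have lt_j : partner (i - k.*2) < m by apply: partner_lt => //; lia.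
have -> : (k.*2 + partner (i - k.*2) < k) = false by lia.
have -> : (k.*2 + partner (i - k.*2) < k.*2) = false by lia.
rewrite addKn partnerK; split; [by rewrite subnKC | | lia].
by rewrite -{2}(subnKC le_ik2) eqn_add2l partner_neq.
Qed.

Lemma exists_pairing_out (A : {set T}) : ~~ odd #|T| -> #|A|.*2 <= #|T| ->
  exists f, pairing f /\ forall v, v \in A -> f v \notin A.
Proof.
move=> even_T small_A.
set k := #|A|; set s := enum A ++ enum (~: A).
have size_s : size s = #|T| by rewrite size_cat -!cardE cardsC.
have us : uniq s.
  rewrite cat_uniq !enum_uniq andbT /=; apply/hasPn => v.
  by rewrite !mem_enum inE.
have s_full v : v \in s by rewrite mem_cat !mem_enum inE orbN.
have [m def_T em] : exists2 m, #|T| = k.*2 + m & ~~ odd m.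
  by exists (#|T| - k.*2); [lia | rewrite oddB // odd_double addbF].
exists (fun v => nth v s (cross_index k (index v s))); split.
  apply: pairing_of_index_involution => // i; rewrite size_s def_T => lt_i.
  by have [] := cross_indexP em lt_i.
move=> v Av.
have iv : index v s < k by rewrite index_cat mem_enum Av /k cardE index_mem mem_enum.
rewrite /cross_index iv nth_cat -cardE ifN; last by lia.
by rewrite -in_setC -mem_enum mem_nth // -cardE addnK; have := cardsC A; lia.
Qed.
End Pairing.

Lemma square_growth_two_steps j a0 s0 s1 s2 :
  j.+1 ^ 2 <= a0 -> a0 <= s0 * s1 -> a0 + s1 <= s1 * s2 ->
  j.+2 ^ 2 <= a0 + s1 + s2.
Proof.
move=> ha0 cut0 cut1.
have s1_gt0 : 0 < s1 by case: s1 cut0 cut1 => //; rewrite muln0; lia.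
have sum_large : j.+1.*2 < s1 + s2.
  rewrite ltnNge -leq_sqr; apply/negP => le_sq.
  have [agm _] := nat_AGM2 s1 s2.
  nia.
nia.
Qed.

Lemma square_le_of_layer_growth (a s : nat -> nat) k : 0 < a 0 ->
  (forall i, i < k -> a i.+1 = a i + s i.+1) ->
  (forall i, i < k -> a i <= s i * s i.+1) -> (k./2).+1 ^ 2 <= a k.
Proof.
move=> a0_gt0 a_rec a_cut.
have even_steps j : j.*2 <= k -> j.+1 ^ 2 <= a j.*2.
  elim: j => [|j IH] le_jk //.
  rewrite doubleS in le_jk *.
  rewrite a_rec ?a_rec; try lia.
  apply: square_growth_two_steps (IH _) (a_cut _ _) _; try lia.
  by rewrite -a_rec; [apply: a_cut|]; lia.
have := odd_double_half k; case: (odd k) => [|] def_k.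
  rewrite -[in a k]def_k add1n a_rec; last by lia.
  by apply: leq_trans (leq_addr _ _); apply: even_steps; lia.
by rewrite -[in a k]def_k; apply: even_steps; lia.
Qed.

Lemma min_half_sq_le (n d k a : nat) : d <= 3 * k ->
  (a.*2 < n -> (k./2).+1 ^ 2 <= a) ->
  (Num.min (n%:R / 2) (d%:R ^+ 2 / 100) <= (a%:R : rat))%R.
Proof.
move=> le_dk growth; rewrite ge_min; case: (leqP n a.*2) => [le_na|/growth sq_le].
  suff : (n%:R <= 2 * a%:R :> rat)%R by move=> ?; apply/orP; left; lra.
  by rewrite -natrM ler_nat; lia.
have : (d%:R ^+ 2 <= 100 * a%:R :> rat)%R.
  rewrite -natrX -natrM ler_nat.
  have := odd_double_half k; nia.
by move=> ?; apply/orP; right; lra.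
Qed.

Lemma path_exit_edge (T : eqType) (e : rel T) (P : pred T) v p :
  path e v p -> P v -> ~~ P (last v p) ->
  exists2 ab, ab \in zip (v :: p) p & [&& e ab.1 ab.2, P ab.1 & ~~ P ab.2].
Proof.
elim: p v => [|w p IH] v /=; first by move=> _ ->.
case/andP=> evw w_path Pv Plast.
case Pw: (P w); last by exists (v, w); rewrite ?inE ?eqxx ?Pv ?Pw ?evw.
have [ab ab_in ab_cross] := IH w w_path Pw Plast.
by exists ab; rewrite // inE ab_in orbT.
Qed.

Section EdgeCut.
Variable T : finType.

Lemma card_le_edge_cut (A : {set T}) (Cut : {set {set T}})
    (f : T -> T) (P : T -> seq T) :
  (forall v w, [set v; f v] != [set w; f w] ->
     forall E, E \in pedges v (P v) -> E \notin pedges w (P w)) ->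
  (forall v, v \in A -> f v \notin A) ->
  (forall v, v \in A -> exists2 E, E \in pedges v (P v) & E \in Cut) ->
  #|A| <= #|Cut|.
Proof.
move=> P_disj f_out P_cut.
pose g v := odflt set0 [pick E in Cut | E \in pedges v (P v)].
have gP v : v \in A -> (g v \in Cut) && (g v \in pedges v (P v)).
  move=> Av; rewrite /g; case: pickP => [E -> //|no_cut].
  by have [E E_path E_cut] := P_cut v Av; have := no_cut E; rewrite E_cut E_path.
rewrite -(card_in_imset (f := g)); last first.
  move=> v w Av Aw eq_g; apply/eqP; apply: contraT => neq_vw.
  have neq_pairs : [set v; f v] != [set w; f w].
    apply: contra (f_out w Aw) => /eqP eq_pairs.
    have : v \in [set w; f w] by rewrite -eq_pairs set21.
    by rewrite !inE (negbTE neq_vw) => /eqP <-.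
  have /andP [_ gv_path] := gP v Av; have /andP [_ gw_path] := gP w Aw.
  by have := P_disj v w neq_pairs _ gv_path; rewrite eq_g gw_path.
by apply/subset_leq_card/subsetP => _ /imsetP [v /gP /andP [? _] ->].
Qed.

End EdgeCut.

(* Layers of any height function that grows by at most one along edges:
   h = dist e x yields the set A of the theorem, h = d - dist e x yields C. *)
Section Layers.
Variables (T : finType) (e : rel T) (h : T -> nat).
Hypothesis h_edge : forall u w, e u w -> h w <= (h u).+1.

Definition sublevel (k : nat) : {set T} := [set z | h z <= k].
Definition level (i : nat) : {set T} := [set z | h z == i].

Lemma card_sublevelS i : #|sublevel i.+1| = #|sublevel i| + #|level i.+1|.
Proof.
have -> : sublevel i.+1 = sublevel i :|: level i.+1.
  by apply/setP => z; rewrite !inE leq_eqVlt ltnS orbC.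
rewrite cardsU; suff -> : sublevel i :&: level i.+1 = set0 by rewrite cards0 subn0.
by apply/setP => z; rewrite !inE; apply/negP => /andP [? /eqP]; lia.
Qed.

Lemma card_sublevel_le_cut (pp : path_pairable e) i :
  #|sublevel i|.*2 <= #|T| -> #|sublevel i| <= #|level i| * #|level i.+1|.
Proof.
move=> small.
have [f [f_pairing f_out]] := exists_pairing_out (proj1 pp) small.
have [P [P_path P_disj]] := proj2 pp f f_pairing.
pose Cut := [set [set ab.1; ab.2] | ab in setX (level i) (level i.+1)].
apply: leq_trans (_ : #|Cut| <= _); last first.
  by rewrite -cardsX leq_imset_card.
apply: (card_le_edge_cut P_disj f_out) => v v_low.
have /and3P [v_path _ /eqP v_end] := P_path v.
have v_end_high : ~~ (h (last v (P v)) <= i).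
  by rewrite v_end; have := f_out v v_low; rewrite inE.
have v_start : h v <= i by move: v_low; rewrite inE.
have [[a b] ab_in /and3P [eab a_low b_high]] :=
  path_exit_edge (P := fun z => h z <= i) v_path v_start v_end_high.
exists [set a; b]; first by apply/mapP; exists (a, b).
apply/imsetP; exists (a, b) => //=.
have b_step := h_edge eab.
by rewrite !inE; apply/andP; split; apply/eqP; move: a_low b_high b_step => /=; lia.
Qed.

Lemma sublevel_square_bound (pp : path_pairable e) z0 k : h z0 = 0 ->
  #|sublevel k|.*2 < #|T| -> (k./2).+1 ^ 2 <= #|sublevel k|.
Proof.
move=> h_z0 small.
apply: (square_le_of_layer_growth (a := fun i => #|sublevel i|)
                                   (s := fun i => #|level i|)).
- by apply/card_gt0P; exists z0; rewrite inE h_z0.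
- by move=> i _; rewrite card_sublevelS.
move=> i lt_ik; apply: (card_sublevel_le_cut pp).
apply: leq_trans (ltnW small); rewrite leq_double; apply/subset_leq_card/subsetP => z.
by rewrite !inE; lia.
Qed.

Lemma sublevel_large (pp : path_pairable e) z0 k d : h z0 = 0 -> d <= 3 * k ->
  (Num.min (#|T|%:R / 2) (d%:R ^+ 2 / 100) <= (#|sublevel k|%:R : rat))%R.
Proof.
move=> h_z0 le_dk; apply: min_half_sq_le le_dk _.
exact: sublevel_square_bound pp z0 k h_z0.
Qed.

Lemma bigcup_level m n :
  \bigcup_(m <= i < n) level i = [set z | m <= h z < n].
Proof.
apply/setP => z; rewrite inE -mem_index_iota.
rewrite (big_morph (fun A : {set T} => z \in A) (in_setU z) (in_set0 z)) big_has.
by rewrite -has_pred1; apply: eq_has => i; rewrite inE eq_sym.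
Qed.

End Layers.

Section Distance.
Variables (T : finType) (e : rel T).

Lemma dist_self x : dist e x x = 0.
Proof.
rewrite /dist; have : 0 < #|T| by apply/card_gt0P; exists x.
by case: #|T| => //= n _; rewrite /ball /= inE eqxx.
Qed.

Lemma dist_edge x u w : e u w -> dist e x w <= (dist e x u).+1.
Proof.
move=> euw; rewrite /dist.
set du := find (fun k => u \in ball e x k) _.
have := find_size (fun k => w \in ball e x k) (iota 0 #|T|); rewrite size_iota => dw_le.
have [du_lt|] := ltnP du.+1 #|T|; last by lia.
have u_du : u \in ball e x du.
  have has_u : has (fun k => u \in ball e x k) (iota 0 #|T|).
    by rewrite has_find size_iota; lia.
  by have := nth_find 0 has_u; rewrite nth_iota //; lia.
have w_du1 : w \in ball e x du.+1.
  rewrite /ball iterS -/(ball e x du) !inE.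
  by apply/orP; right; apply/existsP; exists u; rewrite u_du.
rewrite leqNgt; apply/negP => du1_lt.
by have := before_find 0 du1_lt; rewrite nth_iota // add0n w_du1.
Qed.

End Distance.

Unset Implicit Arguments.
Theorem lemma2 (T : finType) (e : rel T) (e_sym : symmetric e)
  (e_irr : irreflexive e) (x y : T) (d : nat) :
  path_pairable e -> gconnected e -> diameter e = d -> 20 <= d ->
  dist e x y = d ->
  let A := \bigcup_(0 <= i < ((d + 2) %/ 3).+1) sphere e x i in
  let C := \bigcup_((2 * d) %/ 3 <= i < d.+1) sphere e x i in
  (Num.min (#|T|%:R / 2) ((d%:R ^+ 2) / 100) <= (#|A|%:R : rat))%R /\
  (Num.min (#|T|%:R / 2) ((d%:R ^+ 2) / 100) <= (#|C|%:R : rat))%R.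
Proof.
move=> pp _ diam_d _ dist_xy A C.
have dist_le z : dist e x z <= d by rewrite -diam_d; exact: (leq_bigmax (x, z)).
split.
  have -> : A = sublevel (dist e x) ((d + 2) %/ 3).
    by rewrite /A bigcup_level; apply/setP => z; rewrite !inE.
  by apply: (sublevel_large (@dist_edge _ e x) (z0 := x) pp); [exact: dist_self | lia].
have -> : C = sublevel (fun z => d - dist e x z) (d - (2 * d) %/ 3).
  rewrite /C bigcup_level; apply/setP => z; rewrite !inE; have := dist_le z; lia.
have dist_edge_down u w : e u w -> d - dist e x w <= (d - dist e x u).+1.
  by move=> euw; have := dist_edge x (_ : e w u); rewrite e_sym => /(_ euw); lia.
by apply: (sublevel_large dist_edge_down (z0 := y) pp); rewrite ?dist_xy ?subnn //; lia.
Qed.
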